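(* There is an absolute constant $c$ such that for every positive integer $n$ and every out-directed tree $T$ on $m$ vertices, $$\mathrm{R}(\vec{P}_n,T)\le c(n+m).$$
   Context: $\vec{P}_n$ denotes the directed path on $n$ vertices. An out-directed tree is an oriented tree (underlying graph a tree, no bidirected edges) with a vertex $r$ such that all edges are directed away from $r$. $\mathrm{R}(G_1,G_2)$ is the least $N$ such that every red/blue colouring of the edges of the complete directed graph $\overleftrightarrow{K}_N$ (edge $xy$ for every ordered pair of distinct vertices) contains a red copy of $G_1$ or a blue copy of $G_2$. *)

From mathcomp Require Import all_boot.
Set Implicit Arguments. Unset Strict Implicit. Unset Printing Implicit Defensive.

(* A red/blue colouring of the complete directed graph on N vertices
   (vertex set 'I_N) is col : 'I_N -> 'I_N -> bool, where col x y = true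
   means the edge xy is red and false means blue (values with x = y are
   irrelevant). *)

Definition coloured_copy (N : nat) (col : 'I_N -> 'I_N -> bool) (b : bool)
  (V : finType) (e : rel V) : Prop :=
  exists f : V -> 'I_N, injective f /\
    (forall u v, e u v -> col (f u) (f v) = b).

Definition ramsey_prop (V1 : finType) (e1 : rel V1) (V2 : finType) (e2 : rel V2)
  (N : nat) : Prop :=
  forall col : 'I_N -> 'I_N -> bool,
    coloured_copy col true e1 \/ coloured_copy col false e2.

Definition dpath_rel (n : nat) : rel 'I_n := fun i j => val j == (val i).+1.

Definition undirected (V : finType) (e : rel V) : rel V :=
  fun u v => e u v || e v u.

Definition oriented_tree (V : finType) (e : rel V) : Prop :=
  [/\ 0 < #|V|,
      (forall v, ~~ e v v),
      (forall u v, ~~ (e u v && e v u)),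
      (forall u v, connect (undirected e) u v) &
      #|[set p : V * V | e p.1 p.2]| = #|V| - 1].

Definition out_tree (V : finType) (e : rel V) : Prop :=
  oriented_tree e /\ exists r : V, forall v, connect e r v.

From mathcomp Require Import all_boot.
Set Implicit Arguments. Unset Strict Implicit. Unset Printing Implicit Defensive.

(* One may take c = 1, with N = n + m. Given a colouring, run a depth-first
   search along the red arcs and let L v be the length of a longest red path
   from v that descends in DFS postorder. If some L v >= n - 1, that path is a
   red copy of P_n. Otherwise there are only n - 1 layers, a red arc x -> y
   with L x <= L y must be a back arc (y is a DFS ancestor of x), and the
   ancestors of x lie in distinct layers. Now embed T greedily, parents
   first: a child of a vertex embedded at x goes to an unused y that is not an
   ancestor of x and has L x <= L y, so xy is blue. Taking y in the lowest
   layer above L x with two unused vertices keeps every layer below an image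
   with at most one unused vertex. *)

Lemma path_ltn_key_inj (T : eqType) (key : T -> nat) x s :
  path (fun u v => key u < key v) x s -> {in s &, injective key}.
Proof.
elim: s x => //= c s IH x /andP[_ hp].
have above : all (fun v => key c < key v) s.
  by apply: order_path_min hp => u v w; apply: ltn_trans.
move=> a b; rewrite !inE => /orP[/eqP->|ha] /orP[/eqP->|hb] //.
- by move=> kcb; have := allP above b hb; rewrite kcb ltnn.
- by move=> kac; have := allP above a ha; rewrite kac ltnn.
- exact: IH hp a b ha hb.
Qed.

Section DescendingPaths.
Variables (T : finType) (red : rel T) (pos : T -> nat).

(* Once [pos v < k], [desc_len k v] is the length of a longest [red]-path
   starting at [v] along which [pos] decreases; [k] is only fuel. *)
Fixpoint desc_len k v : nat :=
  if k is k'.+1 then \max_(u | red v u && (pos u < pos v)) (desc_len k' u).+1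
  else 0.

Lemma desc_len_stable k v : pos v < k -> desc_len k.+1 v = desc_len k v.
Proof.
elim: k v => [//|k IH] v hv /=.
apply: eq_bigr => u /andP[_ hu]; congr S; apply: IH.
exact: leq_trans hu hv.
Qed.

Lemma desc_len_lt k x y :
  pos x < k -> red x y -> pos y < pos x -> desc_len k y < desc_len k x.
Proof.
case: k => [//|k] hx rxy hyx.
have hy : pos y < k by exact: leq_trans hyx hx.
rewrite (desc_len_stable hy) [desc_len k.+1 x]/=.
by apply: (leq_bigmax_cond (F := fun u => (desc_len k u).+1)); rewrite rxy hyx.
Qed.

Lemma desc_len_path k v j : j <= desc_len k v ->
  exists g : nat -> T, g 0 = v /\
    forall i, i < j -> red (g i) (g i.+1) && (pos (g i.+1) < pos (g i)).
Proof.
elim: k v j => [|k IH] v j /=.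
  by rewrite leqn0 => /eqP ->; exists (fun _ => v).
case: j => [|j] hj; first by exists (fun _ => v).
have [u /andP[ru pu] hu] :
    exists2 u, red v u && (pos u < pos v) & j <= desc_len k u.
  apply/exists_inP; apply: contraTT hj => /exists_inPn hu.
  rewrite -leqNgt; apply/bigmax_leqP => u /hu; by rewrite -ltnNge.
have [g [g0 hg]] := IH u j hu.
exists (fun i => if i is i'.+1 then g i' else v); split => // -[|i] hi /=.
  by rewrite g0 ru pu.
exact: hg.
Qed.

Lemma desc_len_dpath k n v : n.-1 <= desc_len k v ->
  exists f : 'I_n -> T, injective f /\
    forall i j, dpath_rel i j -> red (f i) (f j).
Proof.
move=> /desc_len_path[g [_ hg]].
have pos_dec : {in [pred i | i <= n.-1] &,
    {homo pos \o g : i j / i < j >-> j < i}}.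
  apply: homo_ltn_in => [y x z h1 h2|i j _ jD m /andP[_ mj]|i _ hi /=].
  - exact: ltn_trans h2 h1.
  - exact: leq_trans (ltnW mj) jD.
  - by have /andP[] := hg i hi.
have ord_le (i : 'I_n) : i <= n.-1 by rewrite -ltnS (ltn_predK (ltn_ord i)).
exists (fun i => g i); split.
- move=> i j gij; apply/val_inj.
  have [lt_ij|lt_ji|//] := ltngtP i j.
  + by have := pos_dec _ _ (ord_le i) (ord_le j) lt_ij; rewrite /= gij ltnn.
  + by have := pos_dec _ _ (ord_le j) (ord_le i) lt_ji; rewrite /= gij ltnn.
- move=> i j /eqP hj; rewrite hj.
  have lt_i : i < n.-1 by rewrite ltn_predRL -hj ltn_ord.
  by case/andP: (hg i lt_i).
Qed.

End DescendingPaths.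

Lemma connect_last (T : finType) (e : rel T) x p w :
  path e x p -> w \in x :: p -> connect e w (last x p).
Proof.
elim: p x w => [|y p IH] x w /=; first by rewrite inE => _ /eqP ->.
case/andP=> exy hp; rewrite inE => /orP[/eqP ->|hw]; last exact: IH.
exact: connect_trans (connect1 exy) (IH y y hp (mem_head y p)).
Qed.

Section DepthFirstSearch.
Variables (T : finType) (red : rel T).

Definition red_within (S : {set T}) : rel T :=
  fun a b => [&& a \in S, b \in S & red a b].

Definition reachable_within (S Q : {set T}) : Prop :=
  forall v, v \in S -> exists2 q, q \in Q :&: S & connect (red_within S) q v.

Definition parent_step (po : seq T) : rel T :=
  fun b a => red a b && (index b po < index a po).

(* A depth-first search of [S] from roots in [Q]: [po] lists [S] in postorder
   and [anc x] lists the proper ancestors of [x], from its parent up to a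
   root. Arcs to vertices finished later are back arcs. *)
Record dfs_order (S Q : {set T}) (po : seq T) (anc : T -> seq T) : Prop :=
  DfsOrder {
    dfs_mem : po =i S;
    dfs_back : forall x y, x \in S -> y \in S -> red x y ->
      index x po < index y po -> y \in anc x;
    dfs_anc_path : forall x, x \in S -> path (parent_step po) x (anc x);
    dfs_anc_root : forall x, x \in S -> last x (anc x) \in Q;
    dfs_anc_sub : forall x, x \in S -> {subset anc x <= S}
  }.

Lemma dfs_order0 Q : dfs_order set0 Q [::] (fun _ => [::]).
Proof. by split=> // x; rewrite inE. Qed.

Lemma path_within_sub S x p : path (red_within S) x p -> {subset p <= S}.
Proof.
elim: p x => //= y p IH x /andP[/and3P[_ yS _] hp] z.
by rewrite inE => /orP[/eqP->//|/(IH _ hp)].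
Qed.

Lemma path_within_restrict (A S : {set T}) x p :
  {subset x :: p <= A} -> path (red_within S) x p -> path (red_within A) x p.
Proof.
move=> pA; apply: (sub_in_path (P := mem A)); last by apply/allP.
by move=> a b aA bA /and3P[_ _ rab]; rewrite /red_within aA bA.
Qed.

Section Reach.
Variables (S : {set T}) (q : T).
Hypothesis qS : q \in S.

Definition reach := [set w in S | connect (red_within S) q w].

Lemma reach_root : q \in reach.
Proof. by rewrite inE qS connect0. Qed.

Lemma reach_sub : reach \subset S.
Proof. by apply/subsetP => x; rewrite inE => /andP[]. Qed.

Lemma reach_closed x y : x \in reach -> y \in S -> red x y -> y \in reach.
Proof.
rewrite !inE => /andP[xS cx] yS rxy; rewrite yS.
by apply: connect_trans cx (connect1 _); rewrite /red_within xS yS.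
Qed.

(* A shortest path from [q] never returns to [q]. *)
Lemma reachable_reach_succ :
  reachable_within (reach :\ q) [set u | red q u].
Proof.
move=> w; rewrite !inE => /andP[wq /andP[wS /connectP[p pp lp]]].
move: wq; rewrite lp; case: (shortenP pp) => p' pp' up' _ {p pp lp} wq.
case: p' pp' up' wq => [|u p] /=; first by rewrite eqxx.
case/andP=> /and3P[_ uS rqu] pp /andP[qu _] _.
have sub : {subset u :: p <= reach :\ q}.
  move=> z zp; have zS : z \in S.
    by move: zp; rewrite inE => /orP[/eqP->//|/(path_within_sub pp)].
  rewrite !inE zS /=; apply/andP; split; first by apply: contraNneq qu => <-.
  apply: (path_connect (x := q) (p := u :: p)); last by rewrite inE zp orbT.
  by rewrite /= pp andbT /red_within qS uS rqu.
exists u; first by rewrite inE sub ?mem_head // andbT inE.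
by apply/connectP; exists p => //; apply: path_within_restrict pp.
Qed.

Lemma reachable_reach_compl Q :
  reachable_within S Q -> reachable_within (S :\: reach) Q.
Proof.
move=> hQ w; rewrite inE => /andP[wR wS].
have [q2 /setIP[q2Q q2S] /connectP[p pp lp]] := hQ w wS.
have sub : {subset q2 :: p <= S :\: reach}.
  move=> z zp; have zS : z \in S.
    by move: zp; rewrite inE => /orP[/eqP->//|/(path_within_sub pp)].
  rewrite inE zS andbT; apply: contra wR; rewrite !inE wS => /andP[_ cz].
  by rewrite (connect_trans cz) // lp connect_last.
exists q2; first by rewrite inE q2Q sub ?mem_head.
by apply/connectP; exists p => //; apply: path_within_restrict pp.
Qed.

End Reach.

(* The search started at [q]: the part [R :\ q] reached from [q] is searched
   from the red successors of [q] and finished before [q]; the rest of [S] is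
   searched afterwards. *)
Section Glue.
Variables (S Q R : {set T}) (q : T) (po1 po2 : seq T) (anc1 anc2 : T -> seq T).
Hypotheses (qQ : q \in Q) (qR : q \in R) (RS : R \subset S)
  (R_closed : forall x y, x \in R -> y \in S -> red x y -> y \in R)
  (dfs1 : dfs_order (R :\ q) [set u | red q u] po1 anc1)
  (dfs2 : dfs_order (S :\: R) Q po2 anc2).

Local Notation Rq := (R :\ q).
Local Notation SR := (S :\: R).

Definition glue_po := po1 ++ q :: po2.

Definition glue_anc x :=
  if x \in Rq then rcons (anc1 x) q else if x == q then [::] else anc2 x.

Lemma glue_cases x : x \in S -> [\/ x \in Rq, x = q | x \in SR].
Proof.
move=> xS; case: (boolP (x \in R)) => xR; last by constructor 3; rewrite inE xR.
case: (eqVneq x q) => [->|xq]; first by constructor 2.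
by constructor 1; rewrite in_setD1 xq.
Qed.

Lemma notin_Rq : q \notin Rq.
Proof. by rewrite !inE eqxx. Qed.

Lemma SR_notin x : x \in SR -> (x \notin Rq) && (x != q).
Proof.
rewrite inE => /andP[xR _]; rewrite !inE negb_and xR orbT.
by apply: contraNneq xR => ->.
Qed.

Lemma index_glue_Rq x : x \in Rq -> index x glue_po = index x po1.
Proof. by move=> xR; rewrite index_cat (dfs_mem dfs1) xR. Qed.

Lemma index_glue_q : index q glue_po = size po1.
Proof. by rewrite index_cat (dfs_mem dfs1) (negbTE notin_Rq) /= eqxx addn0. Qed.

Lemma index_glue_SR x : x \in SR -> index x glue_po = size po1 + (index x po2).+1.
Proof.
move=> /SR_notin/andP[xR xq]; rewrite index_cat (dfs_mem dfs1) (negbTE xR) /=.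
by rewrite eq_sym (negbTE xq).
Qed.

Lemma index_Rq_lt x : x \in Rq -> index x po1 < size po1.
Proof. by rewrite index_mem (dfs_mem dfs1). Qed.

Lemma glue_back x y : x \in S -> y \in S -> red x y ->
  index x glue_po < index y glue_po -> y \in glue_anc x.
Proof.
move=> xS yS rxy; have [xR|xq|xSR] := glue_cases xS.
- have yR : y \in R by apply: R_closed rxy => //; apply: (subsetP (subD1set R q)).
  rewrite /glue_anc xR mem_rcons inE; case: (eqVneq y q) => [//|yq] /=.
  have yRq : y \in Rq by rewrite !inE yq yR.
  by rewrite !index_glue_Rq //; apply: (dfs_back dfs1).
- subst x; have yR := R_closed qR yS rxy.
  rewrite index_glue_q; have [yRq|->|ySR] := glue_cases yS.
  + by rewrite index_glue_Rq // ltnNge ltnW // index_Rq_lt.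
  + by rewrite index_glue_q ltnn.
  + by move: ySR; rewrite inE yR.
- rewrite /glue_anc; case/andP: (SR_notin xSR) => /negbTE-> /negbTE->.
  rewrite index_glue_SR //; have [yRq|->|ySR] := glue_cases yS.
  + by rewrite index_glue_Rq // ltnNge ltnW // ltn_addr // index_Rq_lt.
  + by rewrite index_glue_q ltnNge leq_addr.
  + rewrite index_glue_SR // ltn_add2l ltnS; exact: (dfs_back dfs2).
Qed.

Lemma glue_anc_path x : x \in S ->
  path (parent_step glue_po) x (glue_anc x) && (last x (glue_anc x) \in Q).
Proof.
move=> xS; have [xRq|->|xSR] := glue_cases xS.
- rewrite /glue_anc xRq last_rcons qQ andbT rcons_path.
  have sub : {subset x :: anc1 x <= Rq}.
    by move=> z; rewrite inE => /orP[/eqP->//|/(dfs_anc_sub dfs1 xRq)].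
  apply/andP; split.
    apply: (sub_in_path (P := mem Rq) (e := parent_step po1)).
    + by move=> a b aR bR; rewrite /parent_step !index_glue_Rq.
    + exact/allP.
    + exact: (dfs_anc_path dfs1).
  rewrite /parent_step index_glue_q.
  have := dfs_anc_root dfs1 xRq; rewrite inE => -> /=.
  by rewrite index_glue_Rq ?index_Rq_lt // sub // mem_last.
- by rewrite /glue_anc (negbTE notin_Rq) eqxx /=.
- rewrite /glue_anc; case/andP: (SR_notin xSR) => /negbTE-> /negbTE->.
  rewrite (dfs_anc_root dfs2) // andbT.
  apply: (sub_in_path (P := mem SR) (e := parent_step po2)).
  + by move=> a b aR bR; rewrite /parent_step !index_glue_SR // ltn_add2l ltnS.
  + by apply/allP => z; rewrite inE => /orP[/eqP->//|/(dfs_anc_sub dfs2 xSR)].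
  + exact: (dfs_anc_path dfs2).
Qed.

Lemma dfs_order_glue : dfs_order S Q glue_po glue_anc.
Proof.
have RqS : Rq \subset S by apply: subset_trans (subD1set _ _) RS.
have SRS : SR \subset S by apply: subsetDl.
split.
- move=> x; rewrite mem_cat inE (dfs_mem dfs1) (dfs_mem dfs2).
  apply/idP/idP; last by case/glue_cases=> [->|->|->]; rewrite ?eqxx ?orbT.
  by case/or3P=> [/(subsetP RqS)|/eqP->|/(subsetP SRS)] //; apply: (subsetP RS).
- exact: glue_back.
- by move=> x /glue_anc_path/andP[].
- by move=> x /glue_anc_path/andP[].
- move=> x xS z; have [xRq|->|xSR] := glue_cases xS.
  + rewrite /glue_anc xRq mem_rcons inE => /orP[/eqP->|]; first exact: (subsetP RS).
    by move/(dfs_anc_sub dfs1 xRq)/(subsetP RqS).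
  + by rewrite /glue_anc (negbTE notin_Rq) eqxx.
  + rewrite /glue_anc; case/andP: (SR_notin xSR) => /negbTE-> /negbTE->.
    by move/(dfs_anc_sub dfs2 xSR)/(subsetP SRS).
Qed.

End Glue.

Lemma dfs_order_exists S Q :
  reachable_within S Q -> exists po anc, dfs_order S Q po anc.
Proof.
have [k] := ubnP #|S|; elim: k S Q => // k IH S Q; rewrite ltnS => leSk hQ.
have [->|[v vS]] := set_0Vmem S.
  by exists [::], (fun _ => [::]); apply: dfs_order0.
have [q /setIP[qQ qS] _] := hQ v vS.
have smaller (A : {set T}) : A \subset S -> q \notin A -> #|A| < k.
  move=> AS qA; apply: leq_trans (proper_card _) leSk.
  by apply/properP; split=> //; exists q.
have RS := reach_sub S q.
have small1 : #|reach S q :\ q| < k.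
  by apply: smaller; [exact: subset_trans (subD1set _ _) RS | rewrite setD11].
have small2 : #|S :\: reach S q| < k.
  by apply: smaller; [exact: subsetDl | rewrite inE (reach_root qS)].
have [po1 [anc1 dfs1]] := IH _ _ small1 (reachable_reach_succ qS).
have [po2 [anc2 dfs2]] := IH _ _ small2 (reachable_reach_compl hQ).
exists (glue_po q po1 po2), (glue_anc (reach S q) q anc1 anc2).
exact: dfs_order_glue qQ (reach_root qS) RS (@reach_closed S q) dfs1 dfs2.
Qed.

End DepthFirstSearch.

Lemma connect_out_arc (V : finType) (e : rel V) (D : {set V}) r w :
  connect e r w -> r \in D -> w \notin D ->
  exists a b, [/\ a \in D, b \notin D & e a b].
Proof.
case/connectP => p pp ->{w}.
elim: p r pp => [|y p IH] r /=; first by move=> _ ->.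
case/andP => ery pp rD; case: (boolP (y \in D)) => yD; first exact: IH.
by move=> _; exists r, y.
Qed.

(* Every non-root vertex has an in-arc, and there are only [#|V| - 1] arcs,
   so the heads of the arcs are exactly the non-root vertices, each once. *)
Lemma out_tree_rooted (V : finType) (e : rel V) : out_tree e ->
  exists r, [/\ forall v, connect e r v, forall u, ~~ e u r &
    forall u u' v, e u v -> e u' v -> u = u'].
Proof.
case=> [[_ _ _ _ card_arcs] [r reach_r]]; exists r.
pose arcs := [set p : V * V | e p.1 p.2]; pose heads := [set p.2 | p in arcs].
have in_arc v : v != r -> v \in heads.
  move=> vr; case/connectP: (reach_r v) => p pp lp.
  case/lastP: p pp lp => [|p' y]; first by move=> _ vr'; rewrite vr' eqxx in vr.
  rewrite rcons_path last_rcons => /andP[_ h] ->.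
  by apply/imsetP; exists (last r p', y); rewrite ?inE.
have sub : [set~ r] \subset heads by apply/subsetP => v; rewrite !inE => /in_arc.
have le_arcs : #|arcs| <= #|[set~ r]| by rewrite cardsC1 card_arcs subn1.
have heads_le : #|heads| <= #|arcs| := leq_imset_card _ _.
have heads_eq : heads = [set~ r].
  by apply/eqP; rewrite eq_sym eqEcard sub; apply: leq_trans heads_le le_arcs.
split=> // [u|u u' v euv eu'v].
  apply: contraT => /negbNE eur.
  have : r \in heads by apply/imsetP; exists (u, r); rewrite ?inE.
  by rewrite heads_eq !inE eqxx.
have /imset_injP inj : #|heads| == #|arcs|.
  by rewrite eqn_leq heads_le heads_eq (leq_trans le_arcs) ?subset_leq_card.
by have := inj (u, v) (u', v); rewrite !inE => /(_ euv eu'v erefl) [].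
Qed.

Section TreeEmbedding.
Variables (V : finType) (e : rel V) (r : V).
Hypotheses (reach_r : forall v, connect e r v) (no_arc_to_r : forall u, ~~ e u r)
  (parent_uniq : forall u u' v, e u v -> e u' v -> u = u').

Variables (W : finType) (blue : rel W) (lay : W -> nat) (K : nat)
  (anc : W -> seq W).
Hypotheses (lay_lt : forall w, lay w < K)
  (blue_up : forall x y, y != x -> lay x <= lay y -> y \notin anc x -> blue x y)
  (anc_lay_inj : forall x, {in anc x &, injective lay})
  (card_W : #|V| + K <= #|W|).

Definition layer_crowded (U : {set W}) (j : nat) : bool :=
  [exists a in U, exists b in U, [&& a != b, lay a == j & lay b == j]].

Definition partial_embedding (D : {set V}) (f : V -> W) : Prop :=
  [/\ r \in D, (forall u v, e u v -> v \in D -> u \in D),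
      {in D &, injective f}, {in D &, forall u v, e u v -> blue (f u) (f v)} &
      {in D, forall u j, j < lay (f u) -> ~~ layer_crowded (~: (f @: D)) j}].

Lemma layer_crowdedS (U U' : {set W}) j :
  U' \subset U -> layer_crowded U' j -> layer_crowded U j.
Proof.
move=> /subsetP sub /exists_inP[a /sub aU /exists_inP[b /sub bU h]].
by apply/exists_inP; exists a => //; apply/exists_inP; exists b.
Qed.

Lemma card_uncrowded (U : {set W}) :
  (forall j, ~~ layer_crowded U j) -> #|U| <= K.
Proof.
move=> unc; pose layO w : 'I_K := Ordinal (lay_lt w).
have inj : {in U &, injective layO}.
  move=> a b aU bU /(congr1 val) /= ab; apply/eqP; apply: contraT => nab.
  have /negP[] := unc (lay a); apply/exists_inP; exists a => //.
  by apply/exists_inP; exists b; rewrite ?nab ?ab ?eqxx.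
rewrite -(card_in_imset inj); apply: leq_trans (max_card _) _.
by rewrite card_ord.
Qed.

Lemma layer_crowded_lt (U : {set W}) j : layer_crowded U j -> j < K.
Proof. by case/exists_inP=> a _ /exists_inP[b _ /and3P[_ /eqP <- _]]. Qed.

Lemma crowded_layer_above D f a :
  partial_embedding D f -> #|D| < #|V| -> a \in D ->
  exists j, (lay (f a) <= j) && layer_crowded (~: (f @: D)) j.
Proof.
case=> _ _ inj _ sparse ltDV aD.
have room : K < #|~: (f @: D)|.
  rewrite -(leq_add2l #|f @: D|) cardsC (card_in_imset inj) addnS -addSn.
  exact: leq_trans (leq_add ltDV (leqnn K)) card_W.
case: (boolP [exists j : 'I_K, (lay (f a) <= j) && layer_crowded (~: (f @: D)) j]).
  by case/existsP=> j hj; exists j.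
move=> /existsPn none; move: room; rewrite ltnNge card_uncrowded // => j.
have [/(sparse a aD) //|le_j] := ltnP j (lay (f a)).
have [jK|Kj] := ltnP j K; first by have := none (Ordinal jK); rewrite /= le_j.
by apply: contraL Kj => /layer_crowded_lt; rewrite -ltnNge.
Qed.

Lemma free_target D f a : partial_embedding D f -> #|D| < #|V| -> a \in D ->
  exists y, [/\ y \notin f @: D, blue (f a) y &
    forall j, j < lay y -> ~~ layer_crowded (~: (f @: D)) j].
Proof.
move=> emb ltDV aD; have [_ _ _ _ sparse] := emb.
case: (ex_minnP (crowded_layer_above emb ltDV aD)) => j /andP[le_j crowded] min_j.
case/exists_inP: crowded => y1 y1U /exists_inP[y2 y2U /and3P[n12 /eqP l1 /eqP l2]].
pose y := if y1 \in anc (f a) then y2 else y1.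
have yU : y \in ~: (f @: D) by rewrite /y; case: ifP.
have ly : lay y = j by rewrite /y; case: ifP.
have y_anc : y \notin anc (f a).
  rewrite /y; case: ifP => [y1a|->//]; apply: contra n12 => y2a.
  by apply/eqP; apply: (@anc_lay_inj (f a)); rewrite ?l1 ?l2.
exists y; split.
- by rewrite inE in yU.
- apply: blue_up y_anc; last by rewrite ly.
  by apply: contraTneq yU => ->; rewrite inE imset_f.
- move=> i; rewrite ly => ij; have [/(sparse a aD) //|le_i] := ltnP i (lay (f a)).
  by apply: contraTN ij => ci; rewrite -leqNgt min_j // le_i.
Qed.

Lemma partial_embedding_root : exists f, partial_embedding [set r] f.
Proof.
have V0 : 0 < #|V| by apply/card_gt0P; exists r.
have /card_gt0P[w0 _] : 0 < #|W| := leq_trans (leq_trans V0 (leq_addr K _)) card_W.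
pose y0 := [arg min_(y < w0) lay y].
exists (fun _ => y0); split.
- exact: set11.
- move=> u v euv; rewrite !inE => /eqP vr.
  by move: euv; rewrite vr (negbTE (no_arc_to_r u)).
- by move=> u v; rewrite !inE => /eqP-> /eqP->.
- by move=> u v; rewrite !inE => /eqP-> /eqP->; rewrite (negbTE (no_arc_to_r r)).
- move=> u _ j; rewrite /y0; case: arg_minnP => // z _ zmin jz.
  apply/exists_inP => -[a _ /exists_inP[b _ /and3P[_ /eqP aj _]]].
  by have := zmin a isT; rewrite aj leqNgt jz.
Qed.

Lemma partial_embedding_extend D f : partial_embedding D f -> #|D| < #|V| ->
  exists b f', b \notin D /\ partial_embedding (b |: D) f'.
Proof.
move=> emb ltDV; have [rD closed inj arcs sparse] := emb.
have /subsetPn[w _ wD] : ~~ ([set: V] \subset D).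
  by apply: contraL ltDV => /subset_leq_card; rewrite cardsT -leqNgt.
have [a [b [aD bD eab]]] := connect_out_arc (reach_r w) rD wD.
have [y [yU blue_ay sparse_y]] := free_target emb ltDV aD.
pose f' v := if v == b then y else f v.
have f'D : {in D, f' =1 f}.
  by move=> v vD; rewrite /f' ifN //; apply: contraNneq bD => <-.
have f'b : f' b = y by rewrite /f' eqxx.
have fD_y v : v \in D -> f v != y.
  by move=> vD; apply: contraNneq yU => <-; rewrite imset_f.
have sub : ~: (f' @: (b |: D)) \subset ~: (f @: D).
  by rewrite imsetU1 f'b (eq_in_imset f'D) setCS subsetUr.
exists b, f'; split=> //; split.
- by rewrite setU1r.
- move=> u v euv; rewrite !inE => /orP[/eqP vb|vD].
    by rewrite vb in euv; rewrite (parent_uniq euv eab) aD orbT.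
  by rewrite (closed _ _ euv vD) orbT.
- move=> u v; rewrite !inE => /orP[/eqP->|uD] /orP[/eqP->|vD] //.
  + by rewrite f'b f'D // => /esym/eqP; rewrite (negbTE (fD_y v vD)).
  + by rewrite f'b f'D // => /eqP; rewrite (negbTE (fD_y u uD)).
  + by rewrite !f'D //; apply: inj.
- move=> u v; rewrite !inE => /orP[/eqP->|uD] /orP[/eqP->|vD] euv.
  + by move: bD; rewrite (parent_uniq euv eab) aD.
  + by move: bD; rewrite (closed _ _ euv vD).
  + by rewrite f'b f'D // (parent_uniq euv eab).
  + by rewrite !f'D //; apply: arcs.
- move=> u; rewrite !inE => /orP[/eqP->|uD] j; rewrite ?f'b ?f'D // => jlt.
  + by apply: contra (sparse_y j jlt); apply: layer_crowdedS.
  + by apply: contra (sparse u uD j jlt); apply: layer_crowdedS.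
Qed.

Lemma tree_embedding :
  exists f : V -> W, injective f /\ forall u v, e u v -> blue (f u) (f v).
Proof.
have grow k : k < #|V| ->
    exists (D : {set V}) (f : V -> W), #|D| = k.+1 /\ partial_embedding D f.
  elim: k => [_|k IH ltkV].
    by have [f emb] := partial_embedding_root; exists [set r], f; rewrite cards1.
  have [D [f [cardD emb]]] := IH (ltnW ltkV).
  have ltDV : #|D| < #|V| by rewrite cardD.
  have [b [f' [bD emb']]] := partial_embedding_extend emb ltDV.
  by exists (b |: D), f'; rewrite cardsU1 bD cardD.
have ltV : #|V|.-1 < #|V| by rewrite ltn_predL; apply/card_gt0P; exists r.
have [D [f [cardD [_ _ inj arcs _]]]] := grow _ ltV.
have DT : D = setT.
  by apply/eqP; rewrite eqEcard subsetT cardsT cardD (ltn_predK ltV) /=.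
exists f; split=> [u v|u v]; [apply: inj | apply: arcs]; by rewrite DT.
Qed.

End TreeEmbedding.

Lemma red_layering (T : finType) (red : rel T) :
  exists (L : T -> nat) (anc : T -> seq T), [/\
    forall n v, n.-1 <= L v -> exists f : 'I_n -> T,
      injective f /\ forall i j, dpath_rel i j -> red (f i) (f j),
    forall x y, y != x -> L x <= L y -> y \notin anc x -> ~~ red x y &
    forall x, {in anc x &, injective L}].
Proof.
have reach_all : reachable_within red setT setT.
  by move=> v _; exists v; rewrite ?inE.
have [po [anc dfs]] := dfs_order_exists reach_all.
pose pos x := index x po.
have in_po x : x \in po by rewrite (dfs_mem dfs) in_setT.
pose L := desc_len red pos (size po).
have L_lt x y : red x y -> pos y < pos x -> L y < L x.
  by apply: desc_len_lt; rewrite index_mem.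
exists L, anc; split.
- by move=> n v; apply: desc_len_dpath.
- move=> x y yx Lxy; apply: contra => rxy.
  have [lt_xy|lt_yx|eq_xy] := ltngtP (pos x) (pos y).
  + exact: (dfs_back dfs).
  + by move: Lxy; rewrite leqNgt L_lt.
  + by move: yx; rewrite (index_inj x (in_po x) (in_po y) eq_xy) eqxx.
- move=> x; apply: (@path_ltn_key_inj _ _ x).
  apply: sub_path (dfs_anc_path dfs (in_setT x)) => b a /andP[].
  exact: L_lt.
Qed.

Theorem mainTheorem15 :
  exists c : nat, forall (n : nat) (V : finType) (e : rel V),
    0 < n -> out_tree e ->
    exists N, N <= c * (n + #|V|) /\ ramsey_prop (@dpath_rel n) e N.
Proof.
exists 1 => n V e _ tree; exists (n + #|V|); split; first by rewrite mul1n.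
move=> col; have [L [anc [long_red no_red up_anc]]] := red_layering col.
have [/existsP[v hv]|/existsPn short] := boolP [exists v, n.-1 <= L v].
  by left; apply: long_red hv.
right; have [r [reach_r no_arc_to_r parent_uniq]] := out_tree_rooted tree.
have lay_lt w : L w < n.-1 by rewrite ltnNge short.
have card_W : #|V| + n.-1 <= #|'I_(n + #|V|)|.
  by rewrite card_ord addnC leq_add2r leq_pred.
have [f [inj arcs]] := tree_embedding reach_r no_arc_to_r parent_uniq
  (blue := fun x y => ~~ col x y) lay_lt no_red up_anc card_W.
by exists f; split=> // u v /arcs /negbTE.
Qed.
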